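(* Let $n\equiv 2\pmod 4$ with $n\geqslant 6$. Then $\{x_1h_{n-1},\ x_2h_n,\ x_3,\ldots,x_n\}$ is a generating set of $\mathcal{AM}_n$ of minimum size. In particular, $\mathcal{AM}_n$ has rank $n$.
   Context: Let $\Omega_n=\{1<2<\cdots<n\}$ and $\mathcal{I}_n$ the monoid of all partial injective maps of $\Omega_n$, written on the right and composed left to right. $\mathcal{AI}_n$ is the set of all $\alpha\in\mathcal{I}_n$ with $\alpha=\sigma|_{\mathrm{Dom}(\alpha)}$ for some even permutation $\sigma$; $\mathcal{PMI}_n$ is the set of monotone (order-preserving or order-reversing) elements and $\mathcal{AM}_n=\mathcal{AI}_n\cap\mathcal{PMI}_n$. The rank of a monoid is the minimum size of a generating set. Let $X_i=\Omega_n\setminus\{i\}$. Define $x_1,\dots,x_n$ as the (unique) order-preserving partial permutations with: $x_1$: domain $X_1$, image $X_n$ if $n$ is odd and $X_{n-1}$ if $n$ is even; $x_2$: domain $X_2$, image $X_{n-1}$ if $n$ is odd and $X_n$ if $n$ is even; $x_i$ ($3\leqslant i\leqslant n$): domain $X_i$, image $X_{i-2}$. For $1\leqslant i\leqslant n$, $h_i$ is the unique order-reversing partial permutation with domain and image $X_i$ (the reverse of the partial identity on $X_i$). *)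

From mathcomp Require Import all_boot all_fingroup.
Set Implicit Arguments. Unset Strict Implicit. Unset Printing Implicit Defensive.

(* Omega_n = {1 < ... < n} is modelled by 'I_n, the element x : 'I_n standing
   for the label x.+1.  A partial map of Omega_n is a finite function
   'I_n -> option 'I_n (None = undefined). *)
Definition partmap (n : nat) := {ffun 'I_n -> option 'I_n}.

Definition pinj n (a : partmap n) : bool :=
  [forall x : 'I_n, forall y : 'I_n, (a x != None) && (a x == a y) ==> (x == y)].

(* composition written on the right, left to right: x (a b) = (x a) b *)
Definition pmul n (a b : partmap n) : partmap n :=
  [ffun x => if a x is Some y then b y else None].

Definition pid n : partmap n := [ffun x => Some x].

Definition alt_restr n (a : partmap n) : bool :=
  [exists s : {perm 'I_n}, ~~ odd_perm s &&
     [forall x, (a x != None) ==> (a x == Some (s x))]].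

Definition order_pres n (a : partmap n) : bool :=
  [forall x : 'I_n, forall y : 'I_n, (x < y)%N ==>
     (match a x, a y with Some u, Some v => (u < v)%N | _, _ => true end)].

Definition order_rev n (a : partmap n) : bool :=
  [forall x : 'I_n, forall y : 'I_n, (x < y)%N ==>
     (match a x, a y with Some u, Some v => (v < u)%N | _, _ => true end)].

Definition In_ n : {set partmap n} := [set a | pinj a].
Definition PMI n : {set partmap n} := [set a in In_ n | order_pres a || order_rev a].
Definition AI n : {set partmap n} := [set a in In_ n | alt_restr a].
Definition AM n : {set partmap n} := AI n :&: PMI n.

Definition generates n (M S : {set partmap n}) : Prop :=
  forall f : partmap n, f \in M <->
    exists s : seq (partmap n), all (fun g => g \in S) s /\ f = foldl (@pmul n) (@pid n) s.

Definition is_rank n (M : {set partmap n}) (r : nat) : Prop :=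
  (exists S : {set partmap n}, generates M S /\ #|S| = r) /\
  (forall S : {set partmap n}, generates M S -> r <= #|S|).

(* Build a partial map of 'I_n from a partial map on 1-based labels. *)
Definition of_labels n (f : nat -> option nat) : partmap n :=
  [ffun x : 'I_n => obind (fun k => insub k.-1) (f x.+1)].

(* rank of label k in X_i = Omega_n \ {i} (k <> i), and the label of
   rank r in X_j *)
Definition rank_in (i k : nat) : nat := if k < i then k else k.-1.
Definition elt_of_rank (j r : nat) : nat := if r < j then r else r.+1.

(* the unique order-preserving partial permutation with domain X_i and image X_j *)
Definition op_map n (i j : nat) : partmap n :=
  of_labels n (fun k => if k == i then None
                        else Some (elt_of_rank j (rank_in i k))).

(* h_i: the unique order-reversing partial permutation with domain and image X_i *)
Definition h n (i : nat) : partmap n :=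
  of_labels n (fun k => if k == i then None
                        else Some (elt_of_rank i (n - rank_in i k))).

Definition x n (i : nat) : partmap n :=
  if i == 1 then op_map n 1 (if odd n then n else n.-1)
  else if i == 2 then op_map n 2 (if odd n then n.-1 else n)
  else op_map n i (i - 2).

Definition gen_set n : {set partmap n} :=
  [set pmul (x n 1) (h n n.-1); pmul (x n 2) (h n n)]
  :|: [set:: [seq x n i | i <- iota 3 (n - 2)]].

(* The generator x_k (k >= 3), which shifts X_k onto X_{k-2},
   is the restriction of a 3-cycle, and x_1 h_{n-1}, x_2 h_n are restrictions
   of the reversal of Omega_n followed by a transposition, which is even
   because n/2 is odd.  Composing them yields, for every i, j of the same
   parity, both monotone maps from X_i onto X_j.  No element of AM_n maps X_i
   onto X_j with i, j of different parities: composing it with one of the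
   former would give an element of AM_n that is the order-preserving map from
   X_i onto X_{i+-1}, whose only extension to a permutation is a
   transposition.  Partial identities of proper subsets are products of those
   on the X_i, and a set of size at most n - 2 is moved to an initial segment
   by restrictions of the shifts X_i -> X_{i+2}, each lowering the sum of its
   elements; so every element of rank at most n - 2 is generated.  The only
   element of AM_n of rank n is the identity, the reversal being odd.
   Conversely the partial identity on X_i is a product of generators whose
   first non-identity factor has domain X_i, so any generating set has at
   least n elements. *)

From mathcomp Require Import all_boot all_fingroup.
From mathcomp Require Import zify.
Set Implicit Arguments. Unset Strict Implicit. Unset Printing Implicit Defensive.

Section PartialMaps.
Variable n : nat.
Implicit Types (a b : partmap n) (x y u v w : 'I_n) (D : {set 'I_n}).

Lemma pmulE a b x : pmul a b x = if a x is Some y then b y else None.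
Proof. by rewrite ffunE. Qed.

Lemma pmulA a b (c : partmap n) : pmul (pmul a b) c = pmul a (pmul b c).
Proof. by apply/ffunP=> x; rewrite !pmulE; case: (a x) => // y; rewrite pmulE. Qed.

Lemma pmul1m a : pmul (@pid n) a = a.
Proof. by apply/ffunP=> x; rewrite pmulE ffunE. Qed.

Lemma pmulm1 a : pmul a (@pid n) = a.
Proof. by apply/ffunP=> x; rewrite pmulE; case: (a x) => // y; rewrite ffunE. Qed.

Lemma foldl_pmul a s : foldl (@pmul n) a s = pmul a (foldl (@pmul n) (@pid n) s).
Proof.
elim: s a => [|g s IH] a /=; first by rewrite pmulm1.
by rewrite IH [in RHS]IH pmul1m pmulA.
Qed.

Definition pdom a : {set 'I_n} := [set x | a x != None].
Definition pimg a : {set 'I_n} := [set y | [exists x, a x == Some y]].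
Definition papp a x : 'I_n := odflt x (a x).

Definition pinjective a : Prop := forall x y u, a x = Some u -> a y = Some u -> x = y.

Definition lt_dir (rev : bool) u v : bool := if rev then v < u else u < v.

Definition monotone (rev : bool) a : Prop :=
  forall x y u v, a x = Some u -> a y = Some v -> x < y -> lt_dir rev u v.

Lemma in_pdom a x : (x \in pdom a) = (a x != None).
Proof. by rewrite inE. Qed.

Lemma pimgP a y : reflect (exists x, a x = Some y) (y \in pimg a).
Proof.
rewrite inE; apply: (iffP existsP) => [[x /eqP]|[x e]]; exists x => //.
by rewrite e.
Qed.

Lemma pappE a x : x \in pdom a -> a x = Some (papp a x).
Proof. by rewrite in_pdom /papp; case: (a x). Qed.

Lemma some_pdom a x u : a x = Some u -> x \in pdom a.
Proof. by rewrite in_pdom => ->. Qed.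

Lemma some_pimg a x u : a x = Some u -> u \in pimg a.
Proof. by move=> e; apply/pimgP; exists x. Qed.

Lemma papp_some a x u : a x = Some u -> papp a x = u.
Proof. by rewrite /papp => ->. Qed.

Lemma papp_val a x : x \in pdom a -> omap val (a x) = Some (val (papp a x)).
Proof. by move/pappE ->. Qed.

Lemma lt_dir_irr rev u : ~~ lt_dir rev u u.
Proof. by case: rev; rewrite /lt_dir ltnn. Qed.

Lemma lt_dir_asym rev u v : lt_dir rev u v -> ~~ lt_dir rev v u.
Proof. by case: rev; rewrite /lt_dir /=; lia. Qed.

Lemma lt_dir_trans rev u v w : lt_dir rev u v -> lt_dir rev v w -> lt_dir rev u w.
Proof. by case: rev; rewrite /lt_dir /=; lia. Qed.

Lemma lt_dir_total rev u v : u != v -> lt_dir rev u v || lt_dir rev v u.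
Proof. by rewrite -val_eqE; case: rev; rewrite /lt_dir /=; lia. Qed.

Lemma monotone_pinjective rev a : monotone rev a -> pinjective a.
Proof.
move=> ma x y u ex ey; case: (ltngtP x y) => [xy|yx|/val_inj//].
- by have := ma _ _ _ _ ex ey xy; rewrite (negbTE (lt_dir_irr _ _)).
- by have := ma _ _ _ _ ey ex yx; rewrite (negbTE (lt_dir_irr _ _)).
Qed.

Lemma papp_inj a : pinjective a -> {in pdom a &, injective (papp a)}.
Proof.
move=> ia x y /pappE ex /pappE ey e.
by apply: (ia _ _ (papp a x)) => //; rewrite e.
Qed.

Lemma papp_inj_in a D : pinjective a -> D \subset pdom a -> {in D &, injective (papp a)}.
Proof. by move=> ia Da x y /(subsetP Da) xa /(subsetP Da) ya; apply: papp_inj. Qed.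

Lemma pimgE a : pimg a = papp a @: pdom a.
Proof.
apply/setP=> y; apply/pimgP/imsetP => [[x e]|[x /pappE e ->]]; last by exists x.
by exists x; [apply: some_pdom e | rewrite (papp_some e)].
Qed.

Lemma papp_pimg a x : x \in pdom a -> papp a x \in pimg a.
Proof. by move=> xa; rewrite pimgE imset_f. Qed.

Lemma card_pimg a : pinjective a -> #|pimg a| = #|pdom a|.
Proof. by move=> ia; rewrite pimgE card_in_imset //; apply: papp_inj. Qed.

Lemma pdomM a b : pdom (pmul a b) = [set x | if a x is Some y then y \in pdom b else false].
Proof. by apply/setP=> x; rewrite !inE pmulE; case: (a x) => // y; rewrite inE. Qed.

Lemma pdomM_sub a b : pdom (pmul a b) \subset pdom a.
Proof. by apply/subsetP=> x; rewrite pdomM !inE; case: (a x). Qed.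

Lemma pimgM_domsub a b : pdom b \subset pimg a -> pimg (pmul a b) = pimg b.
Proof.
move=> s; apply/setP=> y; apply/pimgP/pimgP => [[x]|[x e]].
  by rewrite pmulE; case: (a x) => // z e; exists z.
have /(subsetP s) /pimgP [z ez] := some_pdom e.
by exists z; rewrite pmulE ez.
Qed.

Lemma pdomM_imgsub a b : pimg a \subset pdom b -> pdom (pmul a b) = pdom a.
Proof.
move=> s; apply/setP=> x; rewrite pdomM !inE.
by case E: (a x) => [y|] //=; rewrite (subsetP s _ (some_pimg E)).
Qed.

Lemma pimgM a b : pimg a \subset pdom b -> pimg (pmul a b) = papp b @: pimg a.
Proof.
move=> s; apply/setP=> z; apply/pimgP/imsetP => [[x]|[y ya ->]].
  rewrite pmulE; case E: (a x) => [y|] // e.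
  by exists y; [apply: some_pimg E | rewrite (papp_some e)].
case/pimgP: (ya) => x e; exists x; rewrite pmulE e.
by apply: pappE; apply: (subsetP s).
Qed.

Lemma pdomM_eq a b : pimg a = pdom b -> pdom (pmul a b) = pdom a.
Proof. by move=> e; rewrite pdomM_imgsub // e. Qed.

Lemma pimgM_eq a b : pimg a = pdom b -> pimg (pmul a b) = pimg b.
Proof. by move=> e; rewrite pimgM_domsub // e. Qed.

Lemma monotoneM r s a b : monotone r a -> monotone s b -> monotone (r (+) s) (pmul a b).
Proof.
move=> ma mb x y u v; rewrite !pmulE.
case Ex: (a x) => [p|] //; case Ey: (a y) => [q|] // ep eq xy.
have := ma _ _ _ _ Ex Ey xy; case: r {ma} => /= pq; last exact: mb _ _ _ _ ep eq pq.
by have := mb _ _ _ _ eq ep pq; rewrite /lt_dir; case: (s).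
Qed.

Lemma card_before rev a x u : monotone rev a -> a x = Some u ->
  #|[set z in pimg a | lt_dir rev z u]| = #|[set w in pdom a | w < x]|.
Proof.
move=> ma e; have ia := monotone_pinjective ma.
suff -> : [set z in pimg a | lt_dir rev z u] = papp a @: [set w in pdom a | w < x].
  apply: card_in_imset => p q /setIdP [pa _] /setIdP [qa _].
  exact: (papp_inj ia).
apply/setP=> z; rewrite inE; apply/andP/imsetP => [[/pimgP [w ew] zu]|[w]].
  exists w; last by rewrite (papp_some ew).
  rewrite inE (some_pdom ew) /=; case: (ltngtP w x) => // [xw|/val_inj wx].
    by have := lt_dir_asym (ma _ _ _ _ e ew xw); rewrite zu.
  by move: zu; rewrite wx e in ew; case: ew => ->; rewrite (negbTE (lt_dir_irr _ _)).
rewrite inE => /andP [wa wx] ->; split; first exact: papp_pimg.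
exact: ma _ _ _ _ (pappE wa) e wx.
Qed.

Lemma monotone_uniq rev a b : monotone rev a -> monotone rev b ->
  pdom a = pdom b -> pimg a = pimg b -> a = b.
Proof.
move=> ma mb ed ei; apply/ffunP=> x.
case Ea: (a x) => [u|]; last first.
  by apply/esym/eqP; rewrite -[_ == _]negbK -in_pdom -ed in_pdom Ea.
have /pappE Eb : x \in pdom b by rewrite -ed (some_pdom Ea).
rewrite Eb; set v := papp b x in Eb *.
case: (eqVneq u v) => [->//|uv]; exfalso.
have := card_before mb Eb; rewrite -ed -ei -(card_before ma Ea).
have lt_card p q : p \in pimg a -> lt_dir rev p q ->
    #|[set z in pimg a | lt_dir rev z p]| < #|[set z in pimg a | lt_dir rev z q]|.
  move=> pa pq; apply: proper_card; apply/properP; split.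
    by apply/subsetP=> z; rewrite !inE => /andP [-> zp]; apply: lt_dir_trans zp pq.
  exists p; first exact/setIdP.
  by apply/setIdP=> -[_]; apply/negP/lt_dir_irr.
have ua : u \in pimg a by apply: some_pimg Ea.
have va : v \in pimg a by rewrite ei (some_pimg Eb).
by move=> e; case/orP: (lt_dir_total rev uv) => [/(lt_card _ _ ua)|/(lt_card _ _ va)];
  rewrite e ltnn.
Qed.

Definition pid_on D : partmap n := [ffun x => if x \in D then Some x else None].

Lemma pdom_pid_on D : pdom (pid_on D) = D.
Proof. by apply/setP=> x; rewrite in_pdom ffunE; case: ifP. Qed.

Lemma pimg_pid_on D : pimg (pid_on D) = D.
Proof.
apply/setP=> y; apply/pimgP/idP => [[x]|yD]; last by exists y; rewrite ffunE yD.
by rewrite ffunE; case: ifP => // xD [<-].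
Qed.

Lemma pid_on_monotone D : monotone false (pid_on D).
Proof. by move=> x y u v; rewrite !ffunE; case: ifP => // _ [<-]; case: ifP => // _ [<-]. Qed.

Lemma pid_onI D D' : pmul (pid_on D) (pid_on D') = pid_on (D :&: D').
Proof. by apply/ffunP=> x; rewrite pmulE !ffunE inE; case: (x \in D); rewrite ?ffunE. Qed.

Lemma pid_onT : pid_on setT = @pid n.
Proof. by apply/ffunP=> x; rewrite !ffunE inE. Qed.

Definition even_restr a : Prop :=
  exists2 s : {perm 'I_n}, ~~ odd_perm s & {in pdom a, forall x, a x = Some (s x)}.

Lemma even_restr_perm a (s : {perm 'I_n}) : ~~ odd_perm s ->
  {in pdom a, forall x, omap val (a x) = Some (val (s x))} -> even_restr a.
Proof. by move=> es sa; exists s => // x /sa ex; apply: (inj_omap val_inj); rewrite ex. Qed.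

Lemma pimg_restr_perm a (s : {perm 'I_n}) i :
  {in pdom a, forall x, a x = Some (s x)} -> pdom a = [set~ i] -> pimg a = [set~ s i].
Proof.
move=> sa da; apply/setP=> y; rewrite in_setC1; apply/pimgP/idP => [[x ex]|ysi].
  have xa := some_pdom ex; rewrite sa // in ex; case: ex => <-.
  by rewrite (inj_eq perm_inj) -in_setC1 -da.
exists (s^-1 y)%g; rewrite sa ?permKV // da in_setC1.
by apply: contra ysi => /eqP <-; rewrite permKV.
Qed.

Definition am a : Prop := (exists rev, monotone rev a) /\ even_restr a.

Lemma pinjP a : reflect (pinjective a) (pinj a).
Proof.
apply: (iffP forallP) => [ia x y u ex ey|ia x].
  by have /forallP /(_ y) := ia x; rewrite ex ey eqxx => /eqP.
apply/forallP=> y; apply/implyP => /andP [].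
by case E: (a x) => [u|] // _ /eqP /esym E'; apply/eqP; apply: (ia _ _ u).
Qed.

Lemma monotoneP rev a : reflect (monotone rev a) (if rev then order_rev a else order_pres a).
Proof.
by case: rev; (apply: (iffP forallP) => [ma x y u v ex ey xy|ma x];
  [ have /forallP /(_ y) /implyP := ma x; rewrite ex ey; apply
  | apply/forallP=> y; apply/implyP => xy;
    case Ex: (a x) => [u|] //; case Ey: (a y) => [v|] //; apply: ma Ex Ey xy ]).
Qed.

Lemma even_restrP a : reflect (even_restr a) (alt_restr a).
Proof.
apply: (iffP existsP) => [[s /andP [es /forallP sa]]|[s es sa]]; exists s => //.
  by move=> x xa; apply/eqP; move/implyP: (sa x); rewrite -in_pdom; apply.
by rewrite es; apply/forallP=> x; apply/implyP; rewrite -in_pdom => /sa ->.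
Qed.

Lemma in_AM a : a \in AM n <-> am a.
Proof.
rewrite !inE; split.
  case/andP=> /andP [_ /even_restrP ea] /andP [_ /orP m]; split=> //.
  by case: m => [/(monotoneP false)|/(monotoneP true)] m; eexists; apply: m.
case=> [[rev ma] /even_restrP ->]; have /pinjP -> := monotone_pinjective ma.
by case: rev ma => /monotoneP ->; rewrite ?orbT.
Qed.

Lemma am_pmul a b : am a -> am b -> am (pmul a b).
Proof.
move=> [[r ma] [s es sa]] [[r' mb] [t et tb]]; split.
  by exists (r (+) r'); apply: monotoneM.
exists (s * t)%g; first by rewrite odd_permM; case: odd_perm es; case: odd_perm et.
move=> x; rewrite in_pdom pmulE; case E: (a x) => [y|] // yb.
rewrite permM; have := sa x (some_pdom E); rewrite E => -[<-].
by apply: tb; rewrite in_pdom.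
Qed.

Lemma am_pid : am (@pid n).
Proof.
split; first by exists false => x y u v; rewrite !ffunE => -[<-] [<-].
by exists 1%g; [rewrite odd_perm1 | move=> x _; rewrite ffunE perm1].
Qed.

Definition spanned (S : {set partmap n}) a : Prop :=
  exists s, all (fun g => g \in S) s /\ a = foldl (@pmul n) (@pid n) s.

Variable S : {set partmap n}.

Lemma spanned_pid : spanned S (@pid n).
Proof. by exists [::]. Qed.

Lemma spanned_mem a : a \in S -> spanned S a.
Proof. by move=> aS; exists [:: a]; rewrite /= aS pmul1m. Qed.

Lemma spanned_pmul a b : spanned S a -> spanned S b -> spanned S (pmul a b).
Proof.
move=> [s [sS ->]] [t [tS ->]]; exists (s ++ t); rewrite all_cat sS.
by rewrite foldl_cat [in RHS]foldl_pmul.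
Qed.

Lemma spanned_am : {in S, forall g, am g} -> forall a, spanned S a -> am a.
Proof.
move=> amS _ [s [+ ->]]; elim/last_ind: s => [|s g IH]; first by move=> _; apply: am_pid.
by rewrite all_rcons foldl_rcons => /andP [gS sS]; apply: am_pmul (IH sS) (amS g gS).
Qed.

End PartialMaps.

Ltac rank_lia := rewrite /rank_in /elt_of_rank; repeat case: ifP; move=> *; lia.

Lemma rank_in_S a y : y != a -> rank_in a.+1 y.+1 = (rank_in a y).+1.
Proof. rank_lia. Qed.

Lemma elt_of_rank_S b r : elt_of_rank b.+1 r.+1 = (elt_of_rank b r).+1.
Proof. rank_lia. Qed.

Lemma rank_in_lt N a y : a < N -> y < N -> y != a -> rank_in a y < N.-1.
Proof. rank_lia. Qed.

Lemma elt_of_rank_lt N b r : r < N.-1 -> elt_of_rank b r < N.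
Proof. rank_lia. Qed.

Lemma elt_of_rank_neq b r : elt_of_rank b r != b.
Proof. rank_lia. Qed.

Lemma rank_inK a y : y != a -> elt_of_rank a (rank_in a y) = y.
Proof. rank_lia. Qed.

Lemma elt_of_rankK a r : rank_in a (elt_of_rank a r) = r.
Proof. rank_lia. Qed.

Lemma rank_in_mono a y z : y < z -> y != a -> z != a -> rank_in a y < rank_in a z.
Proof. rank_lia. Qed.

Lemma elt_of_rank_mono b r s : r < s -> elt_of_rank b r < elt_of_rank b s.
Proof. rank_lia. Qed.

Lemma of_labels_val n (F : nat -> option nat) (y : 'I_n) :
  (forall k, F y.+1 = Some k -> k.-1 < n) -> omap val (of_labels n F y) = omap predn (F y.+1).
Proof. by rewrite ffunE; case: (F y.+1) => //= k /(_ k erefl) lt; rewrite insubT. Qed.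

Section RankMaps.
Variables (n : nat) (a b : 'I_n) (g : nat -> nat) (f : partmap n).
Hypothesis fE : forall y,
  omap val (f y) = if y == a then None else Some (elt_of_rank b (g (rank_in a y))).
Hypothesis g_lt : forall r, r < n.-1 -> g r < n.-1.
Hypothesis gK : forall r, r < n.-1 -> g (g r) = r.

Lemma rank_map_val y u : f y = Some u -> y != a /\ val u = elt_of_rank b (g (rank_in a y)).
Proof. by move=> fy; have := fE y; rewrite fy; case: eqP => // /eqP ya [<-]. Qed.

Lemma pdom_rank_map : pdom f = [set~ a].
Proof.
apply/setP=> y; rewrite in_pdom in_setC1; have := fE y.
by case: eqP => _; case: (f y).
Qed.

Lemma pimg_rank_map : pimg f = [set~ b].
Proof.
apply/setP=> w; rewrite in_setC1; apply/pimgP/idP => [[y /rank_map_val [_ eu]]|wb].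
  by rewrite -val_eqE eu elt_of_rank_neq.
have r_lt : g (rank_in b w) < n.-1 by apply/g_lt/rank_in_lt.
have [y ey] : {y : 'I_n | val y = elt_of_rank a (g (rank_in b w))}.
  by exists (Ordinal (elt_of_rank_lt a r_lt)).
have ya : y != a by rewrite -val_eqE ey elt_of_rank_neq.
exists y; have := fE y; rewrite (negbTE ya).
case: (f y) => // u [eu]; congr Some; apply: val_inj.
by rewrite /= eu ey elt_of_rankK gK ?rank_inK //; apply: rank_in_lt.
Qed.

Lemma rank_map_monotone rev :
  (forall r s, r < s -> s < n.-1 -> if rev then g s < g r else g r < g s) -> monotone rev f.
Proof.
move=> g_mono y z u v /rank_map_val [ya eu] /rank_map_val [za ev] yz.
have lt_ranks := rank_in_mono yz ya za.
have z_rank : rank_in a z < n.-1 by apply: rank_in_lt.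
by rewrite /lt_dir eu ev; case: rev g_mono => /(_ _ _ lt_ranks z_rank); apply: elt_of_rank_mono.
Qed.

End RankMaps.

Section OpMaps.
Variable n : nat.
Implicit Types (a b y : 'I_n).

Lemma op_map_val a b y : omap val (op_map n a.+1 b.+1 y) =
  if y == a then None else Some (elt_of_rank b (rank_in a y)).
Proof.
have rank_lt := rank_in_lt (ltn_ord a) (ltn_ord y).
rewrite /op_map of_labels_val eqSS val_eqE; case: eqP => [//|/eqP ya].
  by rewrite /= rank_in_S // elt_of_rank_S.
by move=> k [<-]; rewrite rank_in_S // elt_of_rank_S; apply/elt_of_rank_lt/rank_lt.
Qed.

Lemma h_val a y : omap val (h n a.+1 y) =
  if y == a then None else Some (elt_of_rank a (n.-2 - rank_in a y)).
Proof.
rewrite /h of_labels_val eqSS val_eqE; case: eqP => [//|/eqP ya];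
  have := rank_in_lt (ltn_ord a) (ltn_ord y) ya; rewrite rank_in_S // => r_lt;
  have -> : n - (rank_in a y).+1 = (n.-2 - rank_in a y).+1 by lia.
  by rewrite elt_of_rank_S.
by rewrite elt_of_rank_S => k [<-]; apply: elt_of_rank_lt; lia.
Qed.

(* With 0-based indices, x_1 h_{n-1} and x_2 h_n are [or_map 0 (n-2)] and
   [or_map 1 (n-1)]. *)
Definition or_map a b : partmap n := pmul (op_map n a.+1 b.+1) (h n b.+1).

Lemma or_map_val a b y : omap val (or_map a b y) =
  if y == a then None else Some (elt_of_rank b (n.-2 - rank_in a y)).
Proof.
rewrite /or_map pmulE; have := op_map_val a b y; case: (op_map n a.+1 b.+1 y) => [z|];
  case: eqP => // _ [ez].
by rewrite h_val -val_eqE /= ez (negbTE (elt_of_rank_neq _ _)) elt_of_rankK.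
Qed.

Lemma pdom_op_map a b : pdom (op_map n a.+1 b.+1) = [set~ a].
Proof. exact: (pdom_rank_map (g := id) (op_map_val a b)). Qed.

Lemma papp_op_map a b y : y != a ->
  (papp (op_map n a.+1 b.+1) y : nat) = elt_of_rank b (rank_in a y).
Proof.
move=> ya; have yd : y \in pdom (op_map n a.+1 b.+1) by rewrite pdom_op_map in_setC1.
by have := op_map_val a b y; rewrite (negbTE ya) papp_val // => -[].
Qed.

Lemma op_mapK a b y : y != a ->
  papp (op_map n b.+1 a.+1) (papp (op_map n a.+1 b.+1) y) = y.
Proof.
move=> ya; have yb : papp (op_map n a.+1 b.+1) y != b.
  by rewrite -val_eqE /= papp_op_map // elt_of_rank_neq.
by apply: val_inj; rewrite /= !papp_op_map // elt_of_rankK rank_inK.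
Qed.

Lemma pimg_op_map a b : pimg (op_map n a.+1 b.+1) = [set~ b].
Proof. exact: (pimg_rank_map (g := id) (op_map_val a b)). Qed.

Lemma op_map_monotone a b : monotone false (op_map n a.+1 b.+1).
Proof. exact: (rank_map_monotone (g := id) (op_map_val a b)). Qed.

Lemma pdom_or_map a b : pdom (or_map a b) = [set~ a].
Proof. exact: (pdom_rank_map (or_map_val a b)). Qed.

Lemma pimg_or_map a b : pimg (or_map a b) = [set~ b].
Proof. by apply: (pimg_rank_map (or_map_val a b)) => r r_lt; lia. Qed.

Lemma or_map_monotone a b : monotone true (or_map a b).
Proof. by apply: (rank_map_monotone (or_map_val a b)) => r s rs s_lt; lia. Qed.

End OpMaps.

Lemma tperm_val n (a b y : 'I_n) :
  val (tperm a b y) = if val y == a then val b else if val y == b then val a else val y.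
Proof.
case: tpermP => [->|->|/eqP ya /eqP yb]; first by rewrite eqxx.
  by case: eqP => [->|]; rewrite ?eqxx.
by rewrite val_eqE (negbTE ya) val_eqE (negbTE yb).
Qed.

Definition rev_perm n : {perm 'I_n} := perm (@rev_ord_inj n).

Lemma rev_perm_val n (y : 'I_n) : val (rev_perm n y) = n - y.+1.
Proof. by rewrite permE. Qed.

Lemma odd_rev_perm n : odd_perm (rev_perm n) = odd n./2.
Proof.
elim: n => [|n IH]; first by rewrite (_ : rev_perm 0 = 1%g) ?odd_perm1 //; apply/permP => -[].
have -> : rev_perm n.+1 = lift_perm ord0 ord_max (rev_perm n).
  apply/permP => y; apply: val_inj; case: (unliftP ord0 y) => [k ->|->].
    rewrite lift_perm_lift /= !rev_perm_val /bump /=.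
    by have := ltn_ord k; case: leqP; rewrite /bump; lia.
  by rewrite lift_perm_id /= rev_perm_val subSS subn0.
by rewrite odd_lift_perm IH /= -/(uphalf n) uphalf_half oddD oddb; case: (odd n).
Qed.

Section Generators.
Variable n : nat.
Hypothesis n_mod4 : n %% 4 = 2.

Lemma mem_gen_set_x (a b : 'I_n) : (a : nat) = b + 2 -> op_map n a.+1 b.+1 \in gen_set n.
Proof.
move=> ab; have a_lt := ltn_ord a; rewrite !inE; apply/orP; right; apply/mapP.
exists a.+1; first by rewrite mem_iota; lia.
by rewrite /x ifF 1?ifF 1?(_ : a.+1 - 2 = b.+1) //; lia.
Qed.

Lemma mem_gen_set_xh (a b : 'I_n) : a < 2 -> (b : nat) = n - 2 + a ->
  or_map a b \in gen_set n.
Proof.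
move=> a_lt2 ab; have n_even : odd n = false by lia.
rewrite /or_map !inE /x /= n_even; case: a a_lt2 ab => -[|[|]] //= _ _ ab.
  by rewrite (_ : b.+1 = n.-1) ?eqxx //; lia.
by rewrite (_ : b.+1 = n) ?eqxx ?orbT //; lia.
Qed.

Lemma am_op_map_shift2 (a b : 'I_n) : (a : nat) = b + 2 -> am (op_map n a.+1 b.+1).
Proof.
move=> ab; have c_lt : b.+1 < n by have := ltn_ord a; lia.
split; first by exists false; apply: op_map_monotone.
(* the 3-cycle b -> b+1 -> a -> b *)
apply: (@even_restr_perm _ _ (tperm b a * tperm (Ordinal c_lt) a)%g).
  by rewrite odd_permM !odd_tperm -!val_eqE /= ab; lia.
move=> y; rewrite pdom_op_map in_setC1 => ya; have ya' : (y : nat) != a := ya.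
rewrite op_map_val (negbTE ya) permM !tperm_val /=; congr Some.
by move: ya'; rank_lia.
Qed.

Lemma am_or_map (a b : 'I_n) : a < 2 -> (b : nat) = n - 2 + a ->
  am (or_map a b).
Proof.
move=> a_lt2 ab; have c_lt : n - 2 < n by lia.
have d_lt : n - 1 < n by lia.
split; first by exists true; apply: or_map_monotone.
apply: (@even_restr_perm _ _ (rev_perm n * tperm (Ordinal c_lt) (Ordinal d_lt))%g).
  by rewrite odd_permM odd_rev_perm odd_tperm -val_eqE /= (_ : odd n./2 = true) 1?ifT; lia.
move=> y; rewrite pdom_or_map in_setC1 => ya; have ya' : (y : nat) != a := ya.
rewrite or_map_val (negbTE ya) permM tperm_val rev_perm_val /=; congr Some.
by have := ltn_ord y; move: ya'; rank_lia.
Qed.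

Lemma gen_set_cases g : g \in gen_set n ->
  (exists a b : 'I_n, [/\ a < 2, (b : nat) = n - 2 + a & g = or_map a b]) \/
  (exists a b : 'I_n, (a : nat) = b + 2 /\ g = op_map n a.+1 b.+1).
Proof.
have n_even : odd n = false by lia.
have ord k : k < n -> {o : 'I_n | (o : nat) = k} by move=> k_lt; exists (Ordinal k_lt).
have [[o0 e0] [o1 e1]] := (ord 0 ltac:(lia), ord 1 ltac:(lia)).
have [[o2 e2] [o3 e3]] := (ord (n - 2) ltac:(lia), ord (n - 1) ltac:(lia)).
rewrite !inE /x /= n_even => /orP [/orP [] /eqP -> | /mapP [k]].
- left; exists o0, o2; rewrite /or_map e0 e2; split => //; first lia.
  by rewrite (_ : (n - 2).+1 = n.-1) //; lia.
- left; exists o1, o3; rewrite /or_map e1 e3; split => //; first lia.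
  by rewrite (_ : (n - 1).+1 = n) //; lia.
rewrite mem_iota => k_in ->; right.
have [[a ea] [b eb]] := (ord k.-1 ltac:(lia), ord (k - 3) ltac:(lia)).
exists a, b; rewrite ea eb ifF ?ifF; try lia; split; first lia.
by rewrite (_ : k.-1.+1 = k) 1?(_ : (k - 3).+1 = k - 2) //; lia.
Qed.

Lemma gen_set_am : {in gen_set n, forall g, am g}.
Proof.
move=> g /gen_set_cases [[a [b [a_lt2 ab ->]]]|[a [b [ab ->]]]].
  exact: am_or_map.
exact: am_op_map_shift2.
Qed.

End Generators.

Section Connections.
Variable n : nat.
Hypothesis n_mod4 : n %% 4 = 2.
Implicit Types (D E F : {set 'I_n}).

Let gens := gen_set n.

Definition connects rev D E : Prop :=
  exists f, [/\ spanned gens f, monotone rev f, pdom f = D & pimg f = E].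

Lemma connects_trans r s D E F : connects r D E -> connects s E F -> connects (r (+) s) D F.
Proof.
move=> [f [sf mf df ef]] [g [sg mg dg eg]]; exists (pmul f g).
by split; [apply: spanned_pmul | apply: monotoneM | rewrite pdomM_eq | rewrite pimgM_eq];
  rewrite ?ef ?dg.
Qed.

Lemma connects_x (a b : 'I_n) : (a : nat) = b + 2 -> connects false [set~ a] [set~ b].
Proof.
move=> ab; exists (op_map n a.+1 b.+1); split; rewrite ?pdom_op_map ?pimg_op_map //.
  exact/spanned_mem/mem_gen_set_x.
exact: op_map_monotone.
Qed.

Lemma connects_or_map (a b : 'I_n) : a < 2 -> (b : nat) = n - 2 + a ->
  connects true [set~ a] [set~ b].
Proof.
move=> a_lt2 ab; exists (or_map a b); split; rewrite ?pdom_or_map ?pimg_or_map //.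
  exact/spanned_mem/mem_gen_set_xh.
exact: or_map_monotone.
Qed.

Lemma connects_down (a b : 'I_n) : b <= a -> odd a = odd b ->
  a = b \/ connects false [set~ a] [set~ b].
Proof.
move=> ba ab_odd; have [m] : exists m, (a : nat) = b + m.*2 by exists (a - b)./2; lia.
elim: m a {ba ab_odd} => [|m IH] a em; first by left; apply: val_inj; rewrite /= em addn0.
have c_lt : b + m.*2 < n by have := ltn_ord a; lia.
right; have ac : (a : nat) = Ordinal c_lt + 2 by rewrite /= em doubleS; lia.
case: (IH (Ordinal c_lt) erefl) => [<-|cb]; first exact: connects_x.
exact: connects_trans (connects_x ac) cb.
Qed.

Lemma connects_widen rev (a b c d : 'I_n) : b <= a -> odd a = odd b -> d <= c -> odd c = odd d ->
  connects rev [set~ b] [set~ c] -> connects rev [set~ a] [set~ d].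
Proof.
move=> ba ab_odd dc cd_odd bc.
have ac : connects rev [set~ a] [set~ c].
  by case: (connects_down ba ab_odd) => [->//|ab]; apply: connects_trans ab bc.
case: (connects_down dc cd_odd) => [<-//|cd].
by rewrite -[rev]addbF; apply: connects_trans ac cd.
Qed.

Lemma connects_parity rev (i j : 'I_n) : odd i = odd j -> connects rev [set~ i] [set~ j].
Proof.
(* Descend from i to b, cross from b to t by x_1 h_{n-1} or x_2 h_n, descend to j;
   the order-preserving crossing is b -> t -> b -> t. *)
move=> ij_odd; have [i_lt j_lt] := (ltn_ord i, ltn_ord j).
have b_lt : odd i < n by lia.
have t_lt : n - 2 + odd i < n by lia.
pose b := Ordinal b_lt; pose t := Ordinal t_lt.
have bt : connects true [set~ b] [set~ t] by apply: connects_or_map => /=; lia.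
have bt_rev : connects rev [set~ b] [set~ t].
  case: rev; first exact: bt.
  have bb : connects true [set~ b] [set~ b] by apply: connects_widen bt => /=; lia.
  exact: connects_trans bb bt.
by apply: connects_widen bt_rev => /=; lia.
Qed.

Lemma spanned_op_map (a b : 'I_n) : odd a = odd b -> spanned gens (op_map n a.+1 b.+1).
Proof.
move=> ab_odd; have [f [sf mf df ef]] := connects_parity false ab_odd.
suff <- : f = op_map n a.+1 b.+1 by [].
by apply: (monotone_uniq mf (@op_map_monotone _ a b)); rewrite ?pdom_op_map ?pimg_op_map.
Qed.

Lemma spanned_pid_on1 (i : 'I_n) : spanned gens (pid_on [set~ i]).
Proof.
suff -> : pid_on [set~ i] = op_map n i.+1 i.+1 by apply: spanned_op_map.
apply: (monotone_uniq (@pid_on_monotone _ _) (@op_map_monotone _ i i));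
  by rewrite ?pdom_pid_on ?pimg_pid_on ?pdom_op_map ?pimg_op_map.
Qed.

Lemma spanned_pid_on D : D != setT -> spanned gens (pid_on D).
Proof.
have [N] := ubnP #|~: D|; elim: N D => // N IH D cardD DT.
have [DC0|[i iD]] := set_0Vmem (~: D).
  by move: DT; rewrite -[D]setCK DC0 setC0 eqxx.
have -> : D = [set~ i] :&: (i |: D).
  apply/setP=> x; rewrite !inE; case: eqP => [->|_] //=.
  by move: iD; rewrite inE => /negbTE.
rewrite -pid_onI; apply: spanned_pmul (spanned_pid_on1 i) _.
have [->|iDT] := eqVneq (i |: D) setT; first by rewrite pid_onT; apply: spanned_pid.
apply: IH iDT; move: cardD; rewrite (cardsD1 i (~: D)) iD setCU setIC -setDE.
by rewrite add1n ltnS.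
Qed.

Lemma connects_restrict rev f D : spanned gens f -> monotone rev f ->
  D \subset pdom f -> D != setT -> connects rev D (papp f @: D).
Proof.
move=> sf mf Df DT; exists (pmul (pid_on D) f); split.
- exact: spanned_pmul (spanned_pid_on DT) sf.
- exact: monotoneM (@pid_on_monotone _ D) mf.
- by rewrite pdomM_imgsub ?pdom_pid_on ?pimg_pid_on.
- by rewrite pimgM ?pimg_pid_on ?pdom_pid_on.
Qed.

Lemma connects_refl D : D != setT -> connects false D D.
Proof.
move=> DT; exists (pid_on D).
by split; rewrite ?pdom_pid_on ?pimg_pid_on //; [apply: spanned_pid_on | apply: pid_on_monotone].
Qed.

Definition iseg k : {set 'I_n} := [set y : 'I_n | y < k].

Lemma card_iseg k : k <= n -> #|iseg k| = k.
Proof.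
move=> kn; have widen_inj : injective (widen_ord kn) by move=> p q [] /val_inj.
suff -> : iseg k = widen_ord kn @: [set: 'I_k] by rewrite card_imset // cardsT card_ord.
apply/setP=> y; rewrite inE; apply/idP/imsetP => [yk|[z _ ->]]; last by rewrite /= ltn_ord.
by exists (Ordinal yk); last apply: val_inj.
Qed.

Definition down_closed D := [forall x in D, forall y : 'I_n, (y <= x) ==> (y \in D)].

Lemma down_closed_iseg D : down_closed D -> D = iseg #|D|.
Proof.
move=> /forall_inP dc; have Dn : #|D| <= n by have := max_card D; rewrite card_ord.
apply/eqP; rewrite eqEcard card_iseg // leqnn andbT.
apply/subsetP=> x xD; rewrite inE.
have: iseg x.+1 \subset D.
  by apply/subsetP=> y; rewrite inE ltnS => yx; move/forallP/(_ y)/implyP: (dc x xD); apply.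
by move/subset_leq_card; rewrite card_iseg.
Qed.

Lemma exists_short_gap D : #|D| <= n - 2 -> ~~ down_closed D ->
  exists i : 'I_n, [/\ i.+2 < n, i \notin D & [exists d in D, i < d <= i.+2]].
Proof.
move=> cardD not_dc.
suff /existsP [i /and3P [? ? ?]] :
  [exists i : 'I_n, [&& i.+2 < n, i \notin D & [exists d in D, i < d <= i.+2]]] by exists i.
apply: contraR not_dc => /existsPn no_gap.
have no_gap' (v w : 'I_n) : v.+2 < n -> v \notin D -> v < w <= v.+2 -> w \notin D.
  move=> v_lt vD vw; apply: contra (no_gap v) => wD.
  by rewrite v_lt vD; apply/existsP; exists w; rewrite wD.
(* Without short gaps, everything above a gap below n - 2 is a gap. *)
have up (z : 'I_n) : z.+2 < n -> z \notin D ->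
    forall k (w : 'I_n), (w : nat) = k -> z <= k -> w \notin D.
  move=> z_lt zD; elim/ltn_ind=> k IH w wk zk; have w_lt := ltn_ord w.
  have [kz|zk2] := leqP k z.+2.
    case: (eqVneq w z) => [->//|wz]; have wz' : (w : nat) != z := wz.
    by apply: no_gap' z_lt zD _; lia.
  have v_lt : k - 2 < n by lia.
  apply: (no_gap' (Ordinal v_lt)) => /=; [lia | apply: (IH (k - 2)) => // | ]; lia.
apply/forall_inP=> x xD; apply/forallP=> y; apply/implyP=> yx; apply: contraT=> yD.
have x_lt := ltn_ord x; have up_x z z_lt zD zx := negbTE (up z z_lt zD x x erefl zx).
have [y_lt|y_ge] := ltnP y.+2 n; first by rewrite (up_x y) in xD.
have [z zD zy] : exists2 z : 'I_n, z \notin D & z != y.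
  have /card_gt1P [z1 [z2 [z1D z2D z12]]] : 1 < #|~: D|.
    by rewrite -(leq_add2l #|D|) cardsC card_ord; lia.
  rewrite !inE in z1D z2D; case: (eqVneq z1 y) => [z1y|]; last by exists z1.
  by exists z2; rewrite // -z1y eq_sym.
have xy : (x : nat) != y by apply: contraNneq yD => /val_inj <-.
have zx : (z : nat) != x by apply: contraNneq zD => /val_inj ->.
have zy' : (z : nat) != y := zy.
by have z_lt := ltn_ord z; rewrite (up_x z) // in xD; lia.
Qed.

Lemma connects_lower_sum D (i : 'I_n) : i.+2 < n -> i \notin D ->
    [exists d in D, i < d <= i.+2] -> #|D| <= n - 2 ->
  exists D', [/\ #|D'| = #|D|, \sum_(x in D') (x : nat) < \sum_(x in D) (x : nat),
                 connects false D D' & connects false D' D].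
Proof.
move=> i2_lt iD /exists_inP [d dD /andP [id di2]] cardD.
(* The shift from X_i onto X_{i+2} lowers i+1 and i+2 by one and fixes the rest. *)
pose j := Ordinal i2_lt; have ij_odd : odd i = odd j by rewrite /= negbK.
pose b := op_map n i.+1 j.+1; pose b' := op_map n j.+1 i.+1.
have Db : D \subset pdom b.
  by rewrite pdom_op_map; apply/subsetP=> x xD; rewrite in_setC1; apply: contraNneq iD => <-.
have b_inj := papp_inj_in (monotone_pinjective (@op_map_monotone _ i j)) Db.
have xi x : x \in D -> (x : nat) != i by move=> xD; apply: contraNneq iD => /val_inj <-.
have b_le x : x \in D -> papp b x <= x.
  by move=> xD; rewrite papp_op_map //= ?xi //; move: (xi x xD); rank_lia.
have b_lt : papp b d < d by rewrite papp_op_map //= ?xi //; move: (xi d dD); rank_lia.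
pose D' := papp b @: D; have card' : #|D'| = #|D| by apply: card_in_imset.
have notT (A : {set 'I_n}) : #|A| <= n - 2 -> A != setT.
  by move=> cardA; apply: contraTneq cardA => ->; rewrite cardsT card_ord; lia.
exists D'; split => //.
- rewrite big_imset // (bigD1 d dD) [X in _ < X](bigD1 d dD) /= -addSn.
  apply: leq_add; first exact: b_lt.
  by apply: leq_sum => x /andP [xD _]; apply: b_le.
- exact: connects_restrict (spanned_op_map ij_odd) (@op_map_monotone _ i j) Db (notT _ cardD).
have D'b' : D' \subset pdom b'.
  rewrite pdom_op_map -(pimg_op_map i j); apply/subsetP=> _ /imsetP [x xD ->].
  by apply: papp_pimg; apply: (subsetP Db).
have -> : D = papp b' @: D'.
  rewrite -imset_comp -[LHS]imset_id; apply: eq_in_imset => x xD /=.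
  by rewrite op_mapK // -val_eqE xi.
apply: connects_restrict (spanned_op_map (esym ij_odd)) (@op_map_monotone _ j i) D'b' _.
by apply: notT; rewrite card'.
Qed.

Lemma connects_iseg D : #|D| <= n - 2 ->
  connects false D (iseg #|D|) /\ connects false (iseg #|D|) D.
Proof.
have [N] := ubnP (\sum_(x in D) (x : nat)); elim: N D => // N IH D sumD cardD.
have [dc|not_dc] := boolP (down_closed D).
  have DT : D != setT by apply: contraTneq cardD => ->; rewrite cardsT card_ord; lia.
  by rewrite -down_closed_iseg //; split; apply: connects_refl.
have [i [i2_lt iD hd]] := exists_short_gap cardD not_dc.
have [D' [card' sum' DD' D'D]] := connects_lower_sum i2_lt iD hd cardD.
have [|D'I ID'] := IH D' (leq_trans sum' (ltnSE sumD)); first by rewrite card'.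
by rewrite card' in D'I ID'; split; [apply: connects_trans DD' D'I | apply: connects_trans ID' D'D].
Qed.

Lemma connects_card_false D E : #|D| = #|E| -> #|D| <= n - 2 -> connects false D E.
Proof.
move=> DE cardD; have [DI _] := connects_iseg cardD.
have [|_ IE] := @connects_iseg E; first by rewrite -DE.
by rewrite DE in DI; apply: connects_trans DI IE.
Qed.

Lemma connects_card rev D E : #|D| = #|E| -> #|D| <= n - 2 -> connects rev D E.
Proof.
case: rev; last exact: connects_card_false.
move=> DE cardD; have /subsetPn [i _ iD] : ~~ ([set: 'I_n] \subset D).
  by apply: contraTN cardD => /subset_leq_card; rewrite cardsT card_ord; lia.
have [f [sf mf df ef]] := connects_parity true (erefl (odd i)).
have Df : D \subset pdom f.
  by rewrite df; apply/subsetP=> x xD; rewrite in_setC1; apply: contraNneq iD => <-.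
have DT : D != setT by apply: contraNneq iD => ->.
have f_inj := papp_inj_in (monotone_pinjective mf) Df.
by apply: connects_trans (connects_restrict sf mf Df DT) (connects_card_false _ _);
  rewrite card_in_imset.
Qed.

End Connections.

Section Classification.
Variable n : nat.
Hypothesis n_mod4 : n %% 4 = 2.
Implicit Types (a : partmap n).

Lemma am_full_pdom a : am a -> pdom a = setT -> a = @pid n.
Proof.
move=> [[rev ma] [s es sa]] da; have as_ x : a x = Some (s x) by apply: sa; rewrite da inE.
have ia : pimg a = setT.
  by apply/setP=> y; rewrite in_setT; apply/pimgP; exists (s^-1 y)%g; rewrite as_ permKV.
case: rev ma => ma; last first.
  rewrite -pid_onT; apply: (monotone_uniq ma (@pid_on_monotone _ _));
  by rewrite ?pdom_pid_on ?pimg_pid_on.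
pose r : partmap n := [ffun x => Some (rev_perm n x)].
have mr : monotone true r.
  move=> x y u v; rewrite !ffunE => -[<-] [<-] xy; rewrite /lt_dir !rev_perm_val.
  by have := ltn_ord y; lia.
have dr : pdom r = setT by apply/setP=> x; rewrite in_pdom ffunE in_setT.
have ir : pimg r = setT.
  apply/setP=> y; rewrite in_setT; apply/pimgP; exists (rev_perm n y); rewrite ffunE; congr Some.
  by apply: val_inj; rewrite /= !rev_perm_val; have := ltn_ord y; lia.
have s_rev : s = rev_perm n.
  apply/permP=> x; have := as_ x; rewrite (monotone_uniq ma mr) ?da ?dr ?ia ?ir //.
  by rewrite ffunE => -[].
by move: es; rewrite s_rev odd_rev_perm; lia.
Qed.

Lemma not_am_adjacent a (i j : 'I_n) : am a -> monotone false a ->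
  pdom a = [set~ i] -> pimg a = [set~ j] -> (j : nat) = i.+1 \/ (i : nat) = j.+1 -> False.
Proof.
move=> [_ [s es sa]] ma da ea ij.
have a_op : a = op_map n i.+1 j.+1.
  by apply: (monotone_uniq ma (@op_map_monotone _ i j)); rewrite ?pdom_op_map ?pimg_op_map.
have s_ij : s i = j by apply/set1_inj/setC_inj; rewrite -ea (pimg_restr_perm sa da).
have s_t : s = tperm i j.
  apply/permP=> y; have [->|yi] := eqVneq y i; first by rewrite s_ij tpermL.
  have := sa y; rewrite da in_setC1 yi a_op => /(_ isT) /(congr1 (omap val)).
  rewrite op_map_val (negbTE yi) => -[ey]; apply: val_inj; rewrite tperm_val /= -ey.
  by have yi' : (y : nat) != i := yi; move: yi'; case: ij => ij; rank_lia.
by move: es; rewrite s_t odd_tperm -val_eqE /=; case: ij => ->; rewrite ?eqn_leq ?ltnn ?andbF.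
Qed.

Lemma am_parity rev a (i j : 'I_n) : am a -> monotone rev a ->
  pdom a = [set~ i] -> pimg a = [set~ j] -> odd i = odd j.
Proof.
move=> aa ma da ea; apply/eqP/negPn/negP => ij_odd.
have [l [lj il]] : exists l : 'I_n, odd l = odd j /\ ((l : nat) = i.+1 \/ (i : nat) = l.+1).
  have [i1_lt|i1_ge] := ltnP i.+1 n.
    by exists (Ordinal i1_lt); split; [rewrite /=; case: (odd i) ij_odd; case: (odd j) | left].
  have i1_lt : i.-1 < n by have := ltn_ord i; lia.
  exists (Ordinal i1_lt); split; last by right => /=; lia.
  by move: ij_odd; rewrite /= (_ : odd i = ~~ odd i.-1); [case: (odd i.-1); case: (odd j) | lia].
have [f [sf mf df ef]] := connects_parity n_mod4 rev (esym lj).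
apply: (@not_am_adjacent (pmul a f) i l) il.
- exact: am_pmul aa (spanned_am (gen_set_am n_mod4) sf).
- by have := monotoneM ma mf; rewrite addbb.
- by rewrite pdomM_eq ?ea.
- by rewrite pimgM_eq ?ea.
Qed.

Lemma am_spanned a : am a -> spanned (gen_set n) a.
Proof.
move=> aa; have [[rev ma] [s es sa]] := aa.
have [dT|dnT] := eqVneq (pdom a) setT; first by rewrite (am_full_pdom aa dT); apply: spanned_pid.
have /subsetPn [i _ ia] : ~~ ([set: 'I_n] \subset pdom a) by rewrite subTset.
suff [f [sf mf df ef]] : connects rev (pdom a) (pimg a).
  by rewrite (monotone_uniq ma mf) ?df ?ef.
have [card_le|card_gt] := leqP #|pdom a| (n - 2).
  by apply: (connects_card n_mod4); rewrite ?card_pimg //; apply: monotone_pinjective ma.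
have da : pdom a = [set~ i].
  apply/eqP; rewrite eqEcard cardsC1 card_ord; apply/andP; split; last by lia.
  by apply/subsetP=> x xa; rewrite in_setC1; apply: contraNneq ia => <-.
have ea := pimg_restr_perm sa da.
by rewrite da ea; apply: (connects_parity n_mod4); apply: am_parity aa ma da ea.
Qed.

Lemma spanned_pdom_factor (S : {set partmap n}) a (i : 'I_n) : {in S, forall g, am g} ->
  spanned S a -> pdom a = [set~ i] -> exists2 g, g \in S & pdom g = [set~ i].
Proof.
move=> amS [s [+ ->]]; elim: s => [_|g s IH] /=.
  by rewrite -pid_onT pdom_pid_on => /setP/(_ i); rewrite !inE eqxx.
rewrite pmul1m foldl_pmul => /andP [gS sS].
have [gT|gnT] := eqVneq (pdom g) setT.
  by rewrite (am_full_pdom (amS g gS) gT) pmul1m; apply: IH.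
move=> dg; exists g => //; have sub_g : [set~ i] \subset pdom g by rewrite -dg pdomM_sub.
apply/eqP; rewrite eqEsubset sub_g andbT; apply/subsetP=> x xg; rewrite in_setC1.
apply: contraNneq gnT => xi; rewrite eqEsubset subsetT; apply/subsetP=> y _.
by case: (eqVneq y i) => [->|yi]; [rewrite -xi | apply: (subsetP sub_g); rewrite in_setC1].
Qed.

Lemma generates_card_ge (S : {set partmap n}) : generates (AM n) S -> n <= #|S|.
Proof.
move=> gen; have amS : {in S, forall g, am g}.
  by move=> g gS; apply/in_AM/gen; exists [:: g]; rewrite /= gS pmul1m.
have factor (i : 'I_n) : exists2 g, g \in S & pdom g = [set~ i].
  have /gen sp : pid_on [set~ i] \in AM n.
    by apply/in_AM/(spanned_am (gen_set_am n_mod4)); apply: spanned_pid_on1.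
  by apply: spanned_pdom_factor amS sp _; rewrite pdom_pid_on.
have sub : [set [set~ i] | i : 'I_n] \subset (@pdom n) @: S.
  by apply/subsetP=> _ /imsetP [i _ ->]; have [g gS <-] := factor i; apply: imset_f.
have card_setC1 : #|[set [set~ i] | i : 'I_n]| = n.
  by rewrite card_imset ?card_ord // => i j /setC_inj /set1_inj.
apply: leq_trans (leq_imset_card (@pdom n) S).
by rewrite -[n in n <= _]card_setC1; apply: subset_leq_card.
Qed.

Lemma card_gen_set_le : #|gen_set n| <= n.
Proof.
rewrite (leq_trans (leq_card_setU _ _)) // cards2 cardsE.
apply: leq_trans (leq_add (_ : _ <= 2) (card_size _)) _; first by case: (_ != _).
by rewrite size_map size_iota; lia.
Qed.

End Classification.

Theorem theorem5p7 (n : nat) (hn4 : n %% 4 = 2) (hn6 : 6 <= n) :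
  generates (AM n) (gen_set n) /\ #|gen_set n| = n /\ is_rank (AM n) n.
Proof.
have gen : generates (AM n) (gen_set n).
  move=> f; split=> [/in_AM /(am_spanned hn4) //|sf].
  exact/in_AM/(spanned_am (gen_set_am hn4)).
have card_gen : #|gen_set n| = n.
  by apply/eqP; rewrite eqn_leq card_gen_set_le // (generates_card_ge hn4 gen).
split=> //; split=> //; split; first by exists (gen_set n).
by move=> S; apply: generates_card_ge.
Qed.
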